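(* Let $G=(\mathcal{V},\mathcal{E})$ be a connected undirected graph on $\mathcal{V}=\{1,\dots,n\}$, let $\mathcal{V}_c\subseteq\mathcal{V}$ be a set of corrupt nodes, $\mathcal{V}_h=\mathcal{V}\setminus\mathcal{V}_c$, and let $G_h=(\mathcal{V}_h,\mathcal{E}_h)$ be the subgraph induced on the honest nodes, with connected components having vertex sets $\mathcal{V}_{h,1},\dots,\mathcal{V}_{h,k_h}$. Consider any (message-passing) protocol on $G$ in which each node $j$ has a real input $s_j$ and private randomness $r_j$; in each round, every node sends to each of its neighbours a message that is a function of its input, its randomness and all messages it has received so far; at the end every node outputs a function of its input, randomness and received messages. Suppose the protocol is correct: for every choice of inputs and randomness, every node outputs $\sum_{j=1}^n s_j$. Define the view of the adversary in an execution as the inputs and randomness of the nodes in $\mathcal{V}_c$, all messages received by nodes in $\mathcal{V}_c$, and the output. Then for each $k=1,\dots,k_h$ the partial sum $\sum_{j\in\mathcal{V}_{h,k}}s_j$ is determined by the adversary's view: any two executions producing the same adversary view have the same value of $\sum_{j\in\mathcal{V}_{h,k}}s_j$ for every $k$.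
   Context: $\mathcal{E}_h=\{\{i,j\}\in\mathcal{E}: i,j\in\mathcal{V}_h\}$. Messages travel only along edges of $G$. *)

From HB Require Import structures.
From mathcomp Require Import all_boot all_order all_algebra.
From mathcomp Require Import reals.
Set Implicit Arguments. Unset Strict Implicit. Unset Printing Implicit Defensive.
Import Order.TTheory GRing.Theory Num.Theory.
Local Open Scope ring_scope.

(* Nodes are 'I_n (i.e. {0,..,n-1}, standing for {1,..,n}).
   A graph is an edge relation e : rel 'I_n. *)
Definition simple_undirected_graph (n : nat) (e : rel 'I_n) : Prop :=
  (forall x y, e x y = e y x) /\ (forall x, ~~ e x x).

Definition connected_graph (n : nat) (e : rel 'I_n) : Prop :=
  forall x y, connect e x y.

Definition honest_rel (n : nat) (e : rel 'I_n) (Vc : {set 'I_n}) : rel 'I_n :=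
  [rel x y | [&& e x y, x \notin Vc & y \notin Vc]].

Definition honest_component (n : nat) (e : rel 'I_n) (Vc : {set 'I_n})
  (i : 'I_n) : {set 'I_n} :=
  [set j | (j \notin Vc) && connect (honest_rel e Vc) i j].

(* What a node has received in one round: for each possible sender j,
   Some m if j is a neighbour and sent m, None otherwise. *)
Definition round_msgs (n : nat) (M : Type) := {ffun 'I_n -> option M}.

(* A (deterministic given inputs and randomness) message-passing protocol.
   send t i j s r h : message sent in round t by node i to node j, as a
   function of i's input s, randomness r and history h of all messages
   received by i in rounds 0..t-1.
   out i s r h : output of node i from its input, randomness and the full
   history of received messages. *)
Record protocol (n : nat) (R Rnd M : Type) := Protocol {
  send : nat -> 'I_n -> 'I_n -> R -> Rnd -> seq (round_msgs n M) -> M;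
  out : 'I_n -> R -> Rnd -> seq (round_msgs n M) -> R
}.

Fixpoint history (n : nat) (R Rnd M : Type) (e : rel 'I_n)
  (P : protocol n R Rnd M) (s : 'I_n -> R) (r : 'I_n -> Rnd) (t : nat)
  : 'I_n -> seq (round_msgs n M) :=
  match t with
  | 0 => fun _ => [::]
  | t'.+1 => fun i =>
      rcons (history e P s r t' i)
        [ffun j => if e j i then Some (send P t' j i (s j) (r j)
                                       (history e P s r t' j))
                   else None]
  end.

Definition output (n : nat) (R Rnd M : Type) (e : rel 'I_n)
  (P : protocol n R Rnd M) (T : nat) (s : 'I_n -> R) (r : 'I_n -> Rnd)
  (i : 'I_n) : R :=
  out P i (s i) (r i) (history e P s r T i).

Definition correct_sum (n : nat) (R : numDomainType) (Rnd M : Type)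
  (e : rel 'I_n) (P : protocol n R Rnd M) (T : nat) : Prop :=
  forall (s : 'I_n -> R) (r : 'I_n -> Rnd) (i : 'I_n),
    output e P T s r i = \sum_(j < n) s j.

Definition same_view (n : nat) (R Rnd M : Type) (e : rel 'I_n)
  (P : protocol n R Rnd M) (T : nat) (Vc : {set 'I_n})
  (s1 s2 : 'I_n -> R) (r1 r2 : 'I_n -> Rnd) : Prop :=
  (forall i, i \in Vc -> s1 i = s2 i) /\
  (forall i, i \in Vc -> r1 i = r2 i) /\
  (forall i, i \in Vc -> history e P s1 r1 T i = history e P s2 r2 T i) /\
  (forall i, output e P T s1 r1 i = output e P T s2 r2 i).

From HB Require Import structures.
From mathcomp Require Import all_boot all_order all_algebra.
From mathcomp Require Import reals.
Set Implicit Arguments. Unset Strict Implicit. Unset Printing Implicit Defensive.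
Import Order.TTheory GRing.Theory Num.Theory.
Local Open Scope ring_scope.

(* Hybrid argument.  Let C be the honest component of i.  Its only neighbours
   outside C are corrupt, and corrupt nodes see the same thing in both
   executions.  Hence the hybrid execution that runs C on the inputs and
   randomness of the first execution and every other node on those of the
   second one is, node by node, indistinguishable from the first execution on
   C and from the second one off C.  Node i then outputs the first total, while
   the hybrid total is sum_C s1 + sum_(not C) s2.  The two executions have the
   same output, so the first total is also the second one,
   sum_C s2 + sum_(not C) s2, and cancelling gives sum_C s1 = sum_C s2. *)

Definition mix (n : nat) (T : Type) (C : {set 'I_n}) (f g : 'I_n -> T) :
  'I_n -> T := fun j => if j \in C then f j else g j.

Definition corrupt_boundary (n : nat) (e : rel 'I_n) (Vc C : {set 'I_n}) :=
  forall x y, x \in C -> y \notin C -> e x y || e y x -> y \in Vc.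

Lemma history_prefix (n : nat) (R Rnd M : Type) (e : rel 'I_n)
    (P : protocol n R Rnd M) s1 r1 s2 r2 (t T : nat) (j : 'I_n) :
  (t <= T)%N ->
  history e P s1 r1 T j = history e P s2 r2 T j ->
  history e P s1 r1 t j = history e P s2 r2 t j.
Proof.
move=> /subnKC <-; elim: (T - t)%N => [|d IH]; first by rewrite addn0.
by rewrite addnS /= => /rcons_inj [] /IH.
Qed.

Lemma honest_component_corrupt_boundary (n : nat) (e : rel 'I_n)
    (Vc : {set 'I_n}) (i : 'I_n) :
  (forall x y, e x y = e y x) ->
  corrupt_boundary e Vc (honest_component e Vc i).
Proof.
move=> esym x y; rewrite !inE (esym y x) orbb => /andP[xVc cix].
rewrite negb_and negbK => /orP[// | /negP ciy] exy.
apply/negPn/negP => yVc; apply: ciy; apply: (connect_trans cix).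
by apply: connect1; apply/and3P.
Qed.

Section Hybrid.

Variables (n : nat) (R Rnd M : Type) (e : rel 'I_n) (P : protocol n R Rnd M).
Variables (T : nat) (Vc C : {set 'I_n}).
Variables (s1 s2 : 'I_n -> R) (r1 r2 : 'I_n -> Rnd).

Hypothesis boundaryC : corrupt_boundary e Vc C.
Hypothesis same_s : forall j, j \in Vc -> s1 j = s2 j.
Hypothesis same_r : forall j, j \in Vc -> r1 j = r2 j.
Hypothesis same_history :
  forall j, j \in Vc -> history e P s1 r1 T j = history e P s2 r2 T j.

Lemma history_mix (t : nat) (j : 'I_n) : (t <= T)%N ->
  history e P (mix C s1 s2) (mix C r1 r2) t j =
  mix C (history e P s1 r1 t) (history e P s2 r2 t) j.
Proof.
rewrite /mix; elim: t j => [|t IH] j tT /=; first by case: ifP.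
have tT' := ltnW tT.
rewrite IH //; case jC: (j \in C); congr rcons; apply/ffunP => k;
  rewrite !ffunE; case ekj: (e k j) => //; congr Some; rewrite IH //;
  case kC: (k \in C) => //.
- have kVc : k \in Vc by apply: (boundaryC jC); rewrite ?kC ?ekj ?orbT.
  by rewrite same_s // same_r // (history_prefix tT' (same_history kVc)).
- have jVc : j \in Vc by apply: (boundaryC kC); rewrite ?jC ?ekj.
  move: (history_prefix tT (same_history jVc)) => /= /rcons_inj [] _.
  by move=> /ffunP /(_ k); rewrite !ffunE ekj => -[].
Qed.

End Hybrid.

Lemma sum_mix (n : nat) (R : nmodType) (C : {set 'I_n}) (f g : 'I_n -> R) :
  \sum_(j < n) mix C f g j = \sum_(j in C) f j + \sum_(j < n | j \notin C) g j.
Proof.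
rewrite (bigID (mem C)) /=; congr (_ + _); apply: eq_bigr => j.
  by rewrite /mix => ->.
by rewrite /mix => /negbTE ->.
Qed.

Theorem proposition1 (R : realType) (n : nat) (e : rel 'I_n)
  (Vc : {set 'I_n}) (Rnd M : Type) (P : protocol n R Rnd M) (T : nat) :
  simple_undirected_graph e ->
  connected_graph e ->
  correct_sum e P T ->
  forall (s1 s2 : 'I_n -> R) (r1 r2 : 'I_n -> Rnd),
    same_view e P T Vc s1 s2 r1 r2 ->
    forall i : 'I_n, i \notin Vc ->
      \sum_(j in honest_component e Vc i) s1 j =
      \sum_(j in honest_component e Vc i) s2 j.
Proof.
move=> [esym _] _ correct s1 s2 r1 r2 [same_s [same_r [same_hist same_out]]] i iVc.
set C := honest_component e Vc i.
have iC : i \in C by rewrite inE iVc connect0.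
have boundaryC : corrupt_boundary e Vc C :=
  honest_component_corrupt_boundary esym.
have hybrid_total : \sum_(j < n) mix C s1 s2 j = \sum_(j < n) s1 j.
  rewrite -(correct _ (mix C r1 r2) i) -(correct s1 r1 i) /output.
  by rewrite (history_mix boundaryC same_s same_r same_hist) // /mix iC.
have same_total : \sum_(j < n) s1 j = \sum_(j < n) s2 j.
  by rewrite -(correct s1 r1 i) -(correct s2 r2 i) same_out.
move: hybrid_total; rewrite same_total sum_mix [X in _ = X -> _](bigID (mem C)) /=.
exact: addIr.
Qed.
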